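(* Let $d\ge1$, put $r=\lfloor (d-1)/2\rfloor$, and let $N=-1$ if $d$ is even and $N=r$ if $d$ is odd. Then the numbers $h^{(d)}_{i,j}$ increase weakly along the following chain: for each $0\le i\le r$, $h^{(d)}_{i,d}\le h^{(d)}_{i,d-1}\le\cdots\le h^{(d)}_{i,-1}$ (for $i<r$), and $h^{(d)}_{i,-1}\le h^{(d)}_{i+1,d}$ for $0\le i<r$, while the last segment is $h^{(d)}_{r,d}\le h^{(d)}_{r,d-1}\le\cdots\le h^{(d)}_{r,N}$. That is, $$h^{(d)}_{0,d}\le\cdots\le h^{(d)}_{0,-1}\le h^{(d)}_{1,d}\le\cdots\le h^{(d)}_{1,-1}\le\cdots\le h^{(d)}_{r,d}\le\cdots\le h^{(d)}_{r,N}.$$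
   Context: For $m\ge1$ and a permutation $\sigma$ of $[m]=\{1,\dots,m\}$, $\mathrm{des}(\sigma)$ is the number of $1\le t\le m-1$ with $\sigma(t)>\sigma(t+1)$; $A(m,i,j)$ is the number of permutations $\sigma$ of $[m]$ with $\mathrm{des}(\sigma)=i$ and $\sigma(1)=j$ (and $A(m,i,j)=0$ if $i<0$). For $d\ge0$ and $-1\le i,j\le d$ define $h^{(d)}_{i,j}=A(d+2,i+1,j+2)$. *)

From HB Require Import structures.
From mathcomp Require Import all_boot all_order all_algebra all_fingroup.
Set Implicit Arguments. Unset Strict Implicit. Unset Printing Implicit Defensive.
Import Order.TTheory GRing.Theory Num.Theory.

(* A permutation sigma of [m] = {1..m} is modelled by s : 'S_m acting on
   {0..m-1}; its one-line word is sigma(t+1) = (s t) + 1. *)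
Definition perm_word (m : nat) (s : 'S_m) : seq nat :=
  [seq (s i : nat).+1 | i : 'I_m].

Definition des (m : nat) (s : 'S_m) : nat :=
  \sum_(t < m.-1) (nth 0 (perm_word s) t.+1 < nth 0 (perm_word s) t).

Definition Aperm (m : nat) (i : int) (j : nat) : nat :=
  if (i < 0)%R then 0%N
  else #|[set s : 'S_m | (des s == `|i|%N) && (head 0%N (perm_word s) == j)]|.

Definition h (d : nat) (i j : int) : nat :=
  Aperm d.+2 (i + 1)%R `|(j + 2)%R|%N.

From HB Require Import structures.
From mathcomp Require Import all_boot all_order all_algebra all_fingroup.
From mathcomp Require Import zify.
Set Implicit Arguments. Unset Strict Implicit. Unset Printing Implicit Defensive.
Import Order.TTheory GRing.Theory Num.Theory.

(* Let E(n,k,j) be the number of permutations of [n+1] with k descents and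
   first value j+1, so that h^(d)_{i,j} = E(d+1,i+1,j+1).  Deleting the first
   letter gives E(n+1,k,j) = sum_{l<j} E(n,k-1,l) + sum_{l>=j} E(n,k,l), and
   complementation gives E(n,k,j) = E(n,n-k,n-j).  By the recurrence, each
   link h_{i,-1} <= h_{i+1,d} of the chain is an equality, and each step
   h_{i,j+1} <= h_{i,j} amounts to D(n,i+1,j) >= 0, where
   D(n,k,j) = E(n,k,j) - E(n,k-1,j).  D obeys the same recurrence as E, and
   D(n,k,j) >= 0 holds for 2k <= n, and for 2k = n+1 when j >= k; both claims
   follow by a joint induction on n, using that complementation makes the
   middle row antisymmetric: D(n,k,n-j) = -D(n,k,j) when 2k = n+1. *)

Lemma nth_perm_word n (s : 'S_n) (i : 'I_n) : nth 0 (perm_word s) i = (s i).+1.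
Proof. by rewrite /perm_word (nth_map i) ?size_enum_ord // nth_ord_enum. Qed.

Lemma head_perm_word n (s : 'S_n.+1) : head 0 (perm_word s) = (s ord0).+1.
Proof. by rewrite -nth0 (nth_perm_word s ord0). Qed.

Lemma des_perm n (s : 'S_n.+1) :
  des s = \sum_(t < n) (s (lift ord0 t) < s (widen_ord (leqnSn n) t)).
Proof.
apply: eq_bigr => t _; rewrite -[t.+1]/(nat_of_ord (lift ord0 t)).
by rewrite -[nat_of_ord t]/(nat_of_ord (widen_ord (leqnSn n) t)) !nth_perm_word.
Qed.

Lemma des_lift_perm0 n (j : 'I_n.+2) (s : 'S_n.+1) :
  des (lift_perm ord0 j s) = des s + (s ord0 < j).
Proof.
have lt_lift (a b : 'I_n.+1) : (lift j a < lift j b) = (a < b).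
  by rewrite !ltnNge leq_bump2.
rewrite !des_perm big_ord_recl addnC; congr (_ + _).
  apply: eq_bigr => t _.
  have -> : widen_ord (leqnSn n.+1) (lift ord0 t) = lift ord0 (widen_ord (leqnSn n) t).
    exact: val_inj.
  by rewrite !lift_perm_lift lt_lift.
have -> : widen_ord (leqnSn n.+1) ord0 = ord0 by exact: val_inj.
rewrite lift_perm_lift lift_perm_id /= /bump.
by case: (leqP j (s ord0)) => /=; lia.
Qed.

Local Open Scope ring_scope.

Definition eulerian n (k : int) (j : nat) : int :=
  \sum_(s : 'S_n.+1 | s ord0 == j :> nat) (des s == k :> int)%:R.

Lemma eulerian_neg n k j : k < 0 -> eulerian n k j = 0.
Proof.
move=> k_lt0; rewrite /eulerian big1 // => s _.
by case: eqP => // eq_des; move: k_lt0; rewrite -eq_des.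
Qed.

Lemma Aperm_eulerian n k j : (Aperm n.+1 k j.+1)%:Z = eulerian n k j.
Proof.
rewrite /Aperm; case: ltrP => [k_lt0|/ger0_norm k_ge0]; first by rewrite eulerian_neg.
rewrite /eulerian -sum1dep_card -natz natr_sum big_mkcond [RHS]big_mkcond; apply: eq_bigr => s _.
have -> : (des s == k :> int) = (des s == `|k|)%N by rewrite -{1}k_ge0.
by rewrite head_perm_word eqSS andbC; case: (_ == j); case: (_ == _).
Qed.

Lemma eulerian_rec n k j : (j < n.+2)%N ->
  eulerian n.+1 k j = \sum_(l < n.+1) eulerian n (if (l < j)%N then k - 1 else k) l.
Proof.
move=> lt_j; pose f (p : 'I_n.+2 * 'S_n.+1) := lift_perm ord0 p.1 p.2.
have f_inj : injective f.
  move=> [a s] [b t] eq_f; have eq_ab : a = b.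
    by have := congr1 (fun u : 'S_n.+2 => u ord0) eq_f; rewrite /= !lift_perm_id.
  subst b; congr (_, _); apply/permP => x; apply: (@lift_inj _ a).
  by have := congr1 (fun u : 'S_n.+2 => u (lift ord0 x)) eq_f; rewrite /= !lift_perm_lift.
have f_bij : bijective f.
  by apply: inj_card_bij => //; rewrite card_prod card_ord !card_Sn factS.
rewrite /eulerian (reindex f) /=; last exact: onW_bij.
transitivity (\sum_(a : 'I_n.+2 | a == j :> nat)
                \sum_(s : 'S_n.+1) (des (f (a, s)) == k :> int)%:R : int).
  by rewrite pair_big; apply: eq_big => [[a s]|[a s] _]; rewrite /f ?lift_perm_id ?andbT.
rewrite (big_pred1 (Ordinal lt_j)) => [|a]; last by rewrite /= -val_eqE.
rewrite (partition_big (fun s : 'S_n.+1 => s ord0) xpredT) //=.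
apply: eq_bigr => l _; apply: eq_big => // s /eqP first_s.
rewrite /f des_lift_perm0 first_s /=; congr (_%:R); apply/eqP/eqP; case: ifP; lia.
Qed.

Lemma eulerian0 k : eulerian 0 k 0 = (k == 0)%:R.
Proof.
rewrite /eulerian (eq_bigl xpredT) => [|s]; last by case: (s ord0) => -[].
rewrite (eq_bigr (fun=> (k == 0)%:R)) => [|s _]; last by rewrite /des big_ord0 eq_sym.
by rewrite sumr_const card_Sn factS fact0.
Qed.

Lemma eulerian_sym n k j : (j <= n)%N ->
  eulerian n k j = eulerian n (n%:Z - k) (n - j).
Proof.
elim: n k j => [|n IHn] k j le_jn.
  by move: le_jn; rewrite leqn0 => /eqP ->; rewrite !eulerian0 sub0r oppr_eq0.
rewrite !eulerian_rec ?ltnS ?leq_subr // (reindex_inj rev_ord_inj) /=.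
apply: eq_bigr => l _; rewrite subSS IHn ?leq_subr // subKn ?leq_ord //; congr eulerian.
by have := ltn_ord l; case: ifP; case: ifP; lia.
Qed.

Definition eulerian_diff n k j := eulerian n k j - eulerian n (k - 1) j.

Lemma eulerian_diff0_ge0 n j : 0 <= eulerian_diff n 0 j.
Proof. by rewrite /eulerian_diff (@eulerian_neg _ (0 - 1)) // subr0 sumr_ge0. Qed.

Lemma eulerian_diff_rec n k j : (j < n.+2)%N ->
  eulerian_diff n.+1 k j =
  \sum_(l < n.+1) eulerian_diff n (if (l < j)%N then k - 1 else k) l.
Proof.
by move=> lt_j; rewrite /eulerian_diff !eulerian_rec // -sumrB; apply: eq_bigr => l _; case: ifP.
Qed.

Lemma eulerian_diff_antisym n k k' j : k + k' = n.+1%:Z -> (j <= n)%N ->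
  eulerian_diff n k' (n - j) = - eulerian_diff n k j.
Proof.
move=> sum_kk' le_jn; rewrite /eulerian_diff opprB.
rewrite !(@eulerian_sym n _ (n - j)) ?leq_subr // subKn //.
by congr (eulerian _ _ _ - eulerian _ _ _); lia.
Qed.

Lemma eulerian_succ_first n k j : (j < n.+1)%N ->
  eulerian n.+1 k j.+1 = eulerian n.+1 k j - eulerian_diff n k j.
Proof.
move=> lt_j; rewrite (@eulerian_rec n k j.+1 lt_j) (@eulerian_rec n k j (ltnW lt_j)).
rewrite (bigD1 (Ordinal lt_j)) //= ltnSn.
rewrite [in RHS](bigD1 (Ordinal lt_j)) //= ltnn /eulerian_diff.
rewrite (eq_bigr (fun l : 'I_n.+1 => eulerian n (if (l < j)%N then k - 1 else k) l)).
  by set S := \sum_(l | _) _; lia.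
move=> l; rewrite -val_eqE /= => ne_lj.
by rewrite ltnS leq_eqVlt (negbTE ne_lj).
Qed.

Lemma eulerian_first_last n k : eulerian n.+1 k 0 = eulerian n.+1 (k + 1) n.+1.
Proof.
rewrite !eulerian_rec //; apply: eq_bigr => l _.
by rewrite ltn_ord addrK.
Qed.

Lemma sum_antisym_eq0 n (P : pred nat) (F : nat -> int) :
  (forall l, (l <= n)%N -> P (n - l)%N = P l) ->
  (forall l, (l <= n)%N -> F (n - l)%N = - F l) ->
  \sum_(l < n.+1 | P l) F l = 0.
Proof.
move=> P_sym F_antisym.
have S_opp : \sum_(l < n.+1 | P l) F l = - \sum_(l < n.+1 | P l) F l.
  rewrite {1}(reindex_inj rev_ord_inj) -sumrN /=.
  by apply: eq_big => l; rewrite subSS ?P_sym ?F_antisym ?leq_ord.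
by move: S_opp; set S := \sum_(l | _) _; lia.
Qed.

Lemma antisym_tail_ge0 n j (F : nat -> int) :
  (forall l, (l <= n)%N -> F (n - l)%N = - F l) ->
  (forall l, (n < 2 * l)%N -> (l <= n)%N -> 0 <= F l) ->
  0 <= \sum_(l < n.+1 | (j <= l)%N) F l.
Proof.
move=> F_antisym F_ge0; rewrite (bigID (fun l : 'I_n.+1 => (l <= n - j)%N)) /=.
rewrite (@sum_antisym_eq0 n (fun l => j <= l <= n - j)%N F) //; last by move=> l le_ln; lia.
rewrite add0r sumr_ge0 // => l /andP[le_jl gt_l].
by apply: F_ge0; have := ltn_ord l; lia.
Qed.

Definition diff_ge0_lower n := forall k j : nat,
  (2 * k <= n)%N -> (j <= n)%N -> 0 <= eulerian_diff n k j.

Definition diff_ge0_middle n := forall p j : nat,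
  n.+1 = (2 * p)%N -> (p <= j <= n)%N -> 0 <= eulerian_diff n p j.

Lemma diff_ge0_lower_step n :
  diff_ge0_lower n -> diff_ge0_middle n -> diff_ge0_lower n.+1.
Proof.
move=> lower middle [|k] j le_kn le_jn; first exact: eulerian_diff0_ge0.
rewrite eulerian_diff_rec // (bigID (fun l : 'I_n.+1 => (l < j)%N)) /=.
apply: addr_ge0.
  rewrite sumr_ge0 // => l lt_lj; rewrite lt_lj (_ : k.+1%:Z - 1 = k) ?lower //; lia.
rewrite (eq_bigr (fun l : 'I_n.+1 => eulerian_diff n k.+1 l)); last by move=> l /negbTE->.
have [le_kn'|eq_n] : (2 * k.+1 <= n)%N \/ n.+1 = (2 * k.+1)%N by lia.
  by rewrite sumr_ge0 // => l _; apply: lower (leq_ord l).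
(* Row k.+1 is then the antisymmetric middle row of level n. *)
under eq_bigl => l do rewrite -leqNgt.
apply: antisym_tail_ge0 => [l le_ln|l lt_n le_ln].
  by apply: eulerian_diff_antisym => //; lia.
by apply: middle => //; lia.
Qed.

Lemma diff_ge0_middle_step n : diff_ge0_lower n -> diff_ge0_middle n.+1.
Proof.
move=> lower [|p] j // eq_n /andP[le_pj le_jn].
have diff_p_ge0 l : (l <= n)%N -> 0 <= eulerian_diff n p l by move=> le_ln; apply: lower; lia.
rewrite eulerian_diff_rec // (bigID (fun l : 'I_n.+1 => (l < j)%N)) /=.
rewrite (eq_bigr (fun l : 'I_n.+1 => eulerian_diff n p l)) => [|l ->]; last first.
  by congr eulerian_diff; lia.
rewrite [X in _ + X](eq_bigr (fun l : 'I_n.+1 => - eulerian_diff n p (n - l))); last first.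
  move=> l /negbTE->.
  by rewrite -(@eulerian_diff_antisym n p p.+1 (n - l)) ?leq_subr ?subKn ?leq_ord //; lia.
rewrite sumrN [X in _ - X](reindex_inj rev_ord_inj) /=.
have -> : \sum_(l < n.+1 | ~~ (n.+1 - l.+1 < j)%N) eulerian_diff n p (n - (n.+1 - l.+1))
        = \sum_(l < n.+1 | ~~ (n - l < j)%N) eulerian_diff n p l.
  by apply: eq_big => l; rewrite subSS // subKn ?leq_ord.
(* l <= n - j < j: the subtracted sum is part of the first one. *)
rewrite [X in X - _](bigID (fun l : 'I_n.+1 => ~~ (n - l < j))%N) /=.
rewrite [X in X + _ - _](eq_bigl (fun l : 'I_n.+1 => ~~ (n - l < j))%N) => [|l]; last first.
  by have := ltn_ord l; lia.
by rewrite addrAC subrr add0r sumr_ge0 // => l _; apply: diff_p_ge0 (leq_ord l).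
Qed.

Lemma eulerian_diff_ge0 n : diff_ge0_lower n /\ diff_ge0_middle n.
Proof.
elim: n => [|n [lower middle]]; last first.
  by split; [exact: diff_ge0_lower_step | exact: diff_ge0_middle_step].
split=> [k j|p j]; last by lia.
by rewrite leqn0 muln_eq0 => /= /eqP-> _; apply: eulerian_diff0_ge0.
Qed.

Lemma h_eulerian d (i : int) (j : nat) :
  (h d i (j%:Z - 1))%:Z = eulerian d.+1 (i + 1) j.
Proof. by rewrite /h (_ : `|(j%:Z - 1 + 2)%R|%N = j.+1) ?Aperm_eulerian //; lia. Qed.

Theorem lemma2p10 (d : nat) (hd : (1 <= d)%N) :
  let r : nat := (d.-1 %/ 2)%N in
  let N : int := if odd d then r%:Z else -1 in
  (forall (i : nat) (j : int), (i <= r)%N ->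
     (if (i < r)%N then -1 else N) <= j -> j + 1 <= d%:Z ->
     (h d i%:Z (j + 1) <= h d i%:Z j)%N) /\
  (forall i : nat, (i < r)%N -> (h d i%:Z (-1) <= h d i.+1%:Z d%:Z)%N).
Proof.
move=> r N; have [lower middle] := eulerian_diff_ge0 d.
split=> [i j le_ir N_le_j le_jd | i _].
  have [J eq_j] : exists J : nat, j = J%:Z - 1.
    by exists `|(j + 1)%R|%N; move: N_le_j; rewrite /N; case: (i < r)%N; case: (odd d); lia.
  subst j; rewrite -lez_nat (_ : J%:Z - 1 + 1 = J.+1%:Z - 1); last by lia.
  rewrite !h_eulerian eulerian_succ_first; last by lia.
  rewrite gerBl (_ : i%:Z + 1 = i.+1%:Z); last by lia.
  have [lt_ir|ge_ir] := ltnP i r; first by apply: lower; lia.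
  move: N_le_j; rewrite /N ltnNge ge_ir /=; case: ifP => odd_d N_le_J.
    by apply: middle; lia.
  by apply: lower; lia.
rewrite -lez_nat (_ : -1 = 0%:Z - 1) // (_ : d%:Z = d.+1%:Z - 1); last by lia.
by rewrite !h_eulerian eulerian_first_last (_ : i.+1%:Z + 1 = i%:Z + 1 + 1); last by lia.
Qed.
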